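(* Let $G=E(1,1)$ be the group of real matrices $\begin{pmatrix} e^{-w}&0&u\\0&e^{w}&v\\0&0&1\end{pmatrix}$, $(u,v,w)\in\mathbb{R}^3$, with left-invariant vector fields $U=e^{-w}\partial_u$, $V=e^{w}\partial_v$, $W=\partial_w$, and $E_1=U-V$, $E_2=-W$, $E_3=\tfrac12(U+V)$. Let $g$ be the left-invariant Lorentzian metric for which $E_1,E_2,E_3$ is pseudo-orthonormal at every point with $g(E_1,E_1)=g(E_2,E_2)=1$, $g(E_3,E_3)=-1$, and let $\nabla$ be its Levi-Civita connection. Let $G$ act on itself by left translations and let $e$ be the identity. For $X\in T_eG$, let $X^*$ be the Killing vector field generated by the one-parameter subgroup $\exp(tX)$ acting by left translations (so $X^*_e=X$) and $\gamma_X(t)=\exp(tX)$ its integral curve through $e$. Then there is no nonzero light-like vector $X\in T_eG$ and constant $k\in\mathbb{R}$ with $\nabla_{X^*}X^*|_{\gamma_X(t)}=k\,X^*_{\gamma_X(t)}$ for all $t$; equivalently, the smooth tangent vector field on the circle of light-like directions $x=(\sin\varphi,\cos\varphi,1)$ given by $\tilde t_x=\big[2-\tfrac12\sin^2\varphi\big](\cos\varphi,-\sin\varphi)$ has no zero.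
   Context: Here the conclusion of the general theorem (existence of a light-like $X$ with $\nabla_{X^*}X^*=kX^*$ along $\gamma_X$) is shown to fail in dimension $3$. Along $\gamma_X$, the Killing field $X^*$ coincides with the left-invariant field $L^X$ with $L^X_e=X$. *)

From Stdlib Require Import Reals Lra Lia Psatz.
Open Scope R_scope.

(* Global coordinates (u,v,w) on G = E(1,1); a point / tangent vector is a
   function nat -> R whose components 0,1,2 are the u,v,w components
   (components >= 3 are ignored everywhere). *)
Definition pt := nat -> R.

Definition sum3 (f : nat -> R) : R := f 0%nat + f 1%nat + f 2%nat.

Definition ebasis (i : nat) : pt := fun j => if Nat.eqb i j then 1 else 0.

(* Group law: matrix product of [[e^-w,0,u],[0,e^w,v],[0,0,1]] *)
Definition mul (p q : pt) : pt := fun i =>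
  match i with
  | O => p 0%nat + exp (- p 2%nat) * q 0%nat
  | S O => p 1%nat + exp (p 2%nat) * q 1%nat
  | _ => p 2%nat + q 2%nat
  end.

Definition ident : pt := fun _ => 0.

(* Left-invariant frame E1 = U - V, E2 = -W, E3 = (U+V)/2, with
   U = e^-w d_u, V = e^w d_v, W = d_w (index 0,1,2 for E1,E2,E3). *)
Definition frameE (p : pt) (a : nat) : pt := fun i =>
  match a, i with
  | O, O => exp (- p 2%nat)
  | O, S O => - exp (p 2%nat)
  | S O, S (S O) => -1
  | S (S O), O => / 2 * exp (- p 2%nat)
  | S (S O), S O => / 2 * exp (p 2%nat)
  | _, _ => 0
  end.

(* Components of a tangent vector at p in the frame E1,E2,E3 (dual coframe). *)
Definition coframe (p : pt) (x : pt) : nat -> R := fun a =>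
  match a with
  | O => (exp (p 2%nat) * x 0%nat - exp (- p 2%nat) * x 1%nat) / 2
  | S O => - x 2%nat
  | _ => exp (p 2%nat) * x 0%nat + exp (- p 2%nat) * x 1%nat
  end.

Definition metric (p : pt) (x y : pt) : R :=
  coframe p x 0%nat * coframe p y 0%nat + coframe p x 1%nat * coframe p y 1%nat
  - coframe p x 2%nat * coframe p y 2%nat.

Definition eta (a b : nat) : R :=
  match a, b with
  | O, O => 1 | S O, S O => 1 | S (S O), S (S O) => -1 | _, _ => 0
  end.

Lemma metric_frame (p : pt) (a b : nat) :
  (a < 3)%nat -> (b < 3)%nat -> metric p (frameE p a) (frameE p b) = eta a b.
Proof.
  intros Ha Hb.
  assert (H1 : exp (p 2%nat) * exp (- p 2%nat) = 1).
  { rewrite <- exp_plus. replace (p 2%nat + - p 2%nat) with 0 by ring. apply exp_0. }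
  destruct a as [|[|[|a]]]; try lia;
  destruct b as [|[|[|b]]]; try lia;
  unfold metric, coframe, frameE, eta; simpl; nra.
Qed.

Definition gc (p : pt) (i j : nat) : R := metric p (ebasis i) (ebasis j).

Definition shift (p : pt) (l : nat) (s : R) : pt := fun i => p i + s * ebasis l i.

Definition is_metric_partials (dg : nat -> nat -> nat -> pt -> R) : Prop :=
  forall l i j p, derivable_pt_lim (fun s => gc (shift p l s) i j) 0 (dg l i j p).

Definition is_inverse_metric (ginv : nat -> nat -> pt -> R) : Prop :=
  forall p i j, (i < 3)%nat -> (j < 3)%nat ->
    sum3 (fun l => ginv i l p * gc p l j) = (if Nat.eqb i j then 1 else 0).

(* Christoffel symbols of the Levi-Civita connection:
   Gamma^k_ij = 1/2 g^{kl} (d_i g_jl + d_j g_il - d_l g_ij) *)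
Definition Gamma (dg : nat -> nat -> nat -> pt -> R) (ginv : nat -> nat -> pt -> R)
  (p : pt) (k i j : nat) : R :=
  sum3 (fun l => ginv k l p * (dg i j l p + dg j i l p - dg l i j p) / 2).

Definition one_param_subgroup (gam : R -> pt) (X : pt) : Prop :=
  (forall s t i, (i < 3)%nat -> gam (s + t) i = mul (gam s) (gam t) i) /\
  (forall i, (i < 3)%nat -> derivable_pt_lim (fun s => gam s i) 0 (X i)).

Definition killing_generator (gam : R -> pt) (Xs : pt -> pt) : Prop :=
  forall p i, (i < 3)%nat ->
    derivable_pt_lim (fun s => mul (gam s) p i) 0 (Xs p i).

Definition self_dir_deriv (Y : pt -> pt) (DY : pt -> pt) : Prop :=
  forall p i, (i < 3)%nat ->
    derivable_pt_lim (fun s => Y (fun j => p j + s * Y p j) i) 0 (DY p i).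

Definition nablaYY (dg : nat -> nat -> nat -> pt -> R) (ginv : nat -> nat -> pt -> R)
  (Y DY : pt -> pt) (p : pt) (i : nat) : R :=
  DY p i + sum3 (fun a => sum3 (fun b => Gamma dg ginv p i a b * Y p a * Y p b)).

Definition nonzero_lightlike (X : pt) : Prop :=
  metric ident X X = 0 /\ exists i, (i < 3)%nat /\ X i <> 0.

(* The condition already fails at the identity e = gamma_X(0), where everything
   is computed explicitly in the coordinates (u,v,w):
   - the Killing field is X*_q = (X_u - X_w q_u, X_v + X_w q_v, X_w), so X*_e = X
     and its derivative along itself is (-X_w X*_u, X_w X*_v, 0);
   - the metric coefficients are g_ij = A_ij e^{2w} + B_ij e^{-2w} + C_ij with
     constant matrices A, B, C, which gives their partial derivatives and, at
     w = 0, the inverse metric;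
   - hence the value of nabla_{X*} X* at e is an explicit quadratic form in X = (a,b,c), and
     nabla_{X*} X* = k X* at e becomes a polynomial system in (a,b,c,k);
   - together with the light-cone equation (a-b)^2/4 + c^2 = (a+b)^2 this
     system only has the solution a = b = c = 0 (an elementary real-algebra
     argument), contradicting X <> 0. *)
From Stdlib Require Import Reals Lra Psatz.
From Coquelicot Require Import Coquelicot.
Open Scope R_scope.

Lemma one_param_subgroup_at_0 (gam : R -> pt) (X : pt) :
  one_param_subgroup gam X ->
  gam 0 0%nat = 0 /\ gam 0 1%nat = 0 /\ gam 0 2%nat = 0.
Proof.
  intros [Hmul _].
  pose proof (Hmul 0 0 0%nat ltac:(lia)) as H0.
  pose proof (Hmul 0 0 1%nat ltac:(lia)) as H1.
  pose proof (Hmul 0 0 2%nat ltac:(lia)) as H2.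
  rewrite Rplus_0_r in H0, H1, H2; unfold mul in H0, H1, H2.
  assert (Hw : gam 0 2%nat = 0) by lra.
  rewrite Hw, Ropp_0, exp_0 in *; lra.
Qed.

Lemma derivable_pt_lim_exp_scal (f : R -> R) (l c : R) :
  derivable_pt_lim f 0 l ->
  derivable_pt_lim (fun s => exp (c * f s)) 0 (c * l * exp (c * f 0)).
Proof.
  intros Hf; apply is_derive_Reals; apply is_derive_Reals in Hf.
  change (c * l * exp (c * f 0)) with (scal (c * l) (exp (c * f 0))).
  apply (is_derive_comp exp (fun s => c * f s)).
  - apply is_derive_Reals, derivable_pt_lim_exp.
  - change (c * l) with (scal c l); apply is_derive_scal, Hf.
Qed.

Lemma killing_field_formula (X : pt) (gam : R -> pt) (Xs : pt -> pt) :
  one_param_subgroup gam X -> killing_generator gam Xs ->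
  forall q, Xs q 0%nat = X 0%nat - X 2%nat * q 0%nat /\
            Xs q 1%nat = X 1%nat + X 2%nat * q 1%nat /\
            Xs q 2%nat = X 2%nat.
Proof.
  intros HG HK q.
  destruct (one_param_subgroup_at_0 gam X HG) as (_ & _ & Hw).
  destruct HG as [_ HD].
  (* the u- and v-components of exp(sX) q are gam_i(s) + exp(c gam_w(s)) q_i *)
  assert (Hcomp : forall i c, (i < 2)%nat ->
    derivable_pt_lim (fun s => gam s i + exp (c * gam s 2%nat) * q i) 0
                     (X i + c * X 2%nat * q i)).
  { intros i c Hi.
    pose proof (derivable_pt_lim_plus _ _ _ _ _ (HD i ltac:(lia))
      (derivable_pt_lim_scal _ (q i) _ _
         (derivable_pt_lim_exp_scal _ _ c (HD 2%nat ltac:(lia))))) as E.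
    unfold plus_fct, mult_real_fct in E; rewrite Hw, Rmult_0_r, exp_0 in E.
    replace (X i + c * X 2%nat * q i) with (X i + q i * (c * X 2%nat * 1)) by ring.
    eapply derivable_pt_lim_ext; [|exact E]; intros s; simpl; ring. }
  split; [|split]; eapply uniqueness_limite; try apply HK; try lia; unfold mul.
  - replace (X 0%nat - X 2%nat * q 0%nat) with (X 0%nat + -1 * X 2%nat * q 0%nat) by ring.
    eapply derivable_pt_lim_ext; [|exact (Hcomp 0%nat (-1) ltac:(lia))].
    intros s; simpl; replace (-1 * gam s 2%nat) with (- gam s 2%nat) by ring; reflexivity.
  - replace (X 1%nat + X 2%nat * q 1%nat) with (X 1%nat + 1 * X 2%nat * q 1%nat) by ring.
    eapply derivable_pt_lim_ext; [|exact (Hcomp 1%nat 1 ltac:(lia))].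
    intros s; simpl; rewrite Rmult_1_l; reflexivity.
  - pose proof (derivable_pt_lim_plus _ _ _ _ _ (HD 2%nat ltac:(lia))
       (derivable_pt_lim_const (q 2%nat) 0)) as E.
    unfold plus_fct in E; rewrite Rplus_0_r in E; exact E.
Qed.

Lemma killing_self_derivative (X : pt) (gam : R -> pt) (Xs DXs : pt -> pt) :
  one_param_subgroup gam X -> killing_generator gam Xs -> self_dir_deriv Xs DXs ->
  forall p, DXs p 0%nat = - X 2%nat * Xs p 0%nat /\
            DXs p 1%nat = X 2%nat * Xs p 1%nat /\
            DXs p 2%nat = 0.
Proof.
  intros HG HK HS p.
  pose proof (killing_field_formula X gam Xs HG HK) as F.
  split; [|split]; eapply uniqueness_limite; try apply (HS p); try lia;
    eapply derivable_pt_lim_ext; try (intros s; symmetry; apply F).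
  - apply is_derive_Reals; auto_derive; auto; ring.
  - apply is_derive_Reals; auto_derive; auto; ring.
  - apply derivable_pt_lim_const.
Qed.

Definition gcoef_A (i j : nat) : R :=
  match i, j with O, O => -3/4 | _, _ => 0 end.
Definition gcoef_B (i j : nat) : R :=
  match i, j with S O, S O => -3/4 | _, _ => 0 end.
Definition gcoef_C (i j : nat) : R :=
  match i, j with
  | O, S O | S O, O => -5/4
  | S (S O), S (S O) => 1
  | _, _ => 0
  end.

Lemma gc_formula (q : pt) (i j : nat) : (i < 3)%nat -> (j < 3)%nat ->
  gc q i j = gcoef_A i j * exp (q 2%nat) * exp (q 2%nat)
           + gcoef_B i j * exp (- q 2%nat) * exp (- q 2%nat) + gcoef_C i j.
Proof.
  intros Hi Hj.
  assert (Hinv : exp (q 2%nat) * exp (- q 2%nat) = 1).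
  { rewrite <- exp_plus, Rplus_opp_r; apply exp_0. }
  destruct i as [|[|[|i]]]; try lia; destruct j as [|[|[|j]]]; try lia;
    unfold gc, metric, coframe, ebasis, gcoef_A, gcoef_B, gcoef_C; simpl; nra.
Qed.

Lemma metric_partials_formula (dg : nat -> nat -> nat -> pt -> R) :
  is_metric_partials dg -> forall l i j p, (i < 3)%nat -> (j < 3)%nat ->
  dg l i j p = ebasis l 2%nat *
    (2 * gcoef_A i j * exp (p 2%nat) * exp (p 2%nat)
     - 2 * gcoef_B i j * exp (- p 2%nat) * exp (- p 2%nat)).
Proof.
  intros Hd l i j p Hi Hj; eapply uniqueness_limite; [apply Hd|].
  eapply derivable_pt_lim_ext; [intros s; symmetry; apply gc_formula; auto|].
  unfold shift; apply is_derive_Reals; auto_derive; auto.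
  rewrite !Rmult_0_l, !Rplus_0_r; ring.
Qed.

Lemma inverse_metric_at_w0 (ginv : nat -> nat -> pt -> R) :
  is_inverse_metric ginv -> forall p, p 2%nat = 0 ->
  ginv 0%nat 0%nat p = 3/4 /\ ginv 0%nat 1%nat p = -5/4 /\ ginv 0%nat 2%nat p = 0 /\
  ginv 1%nat 0%nat p = -5/4 /\ ginv 1%nat 1%nat p = 3/4 /\ ginv 1%nat 2%nat p = 0 /\
  ginv 2%nat 0%nat p = 0 /\ ginv 2%nat 1%nat p = 0 /\ ginv 2%nat 2%nat p = 1.
Proof.
  intros Hinv p Hw.
  assert (G : forall l j, (l < 3)%nat -> (j < 3)%nat ->
            gc p l j = gcoef_A l j + gcoef_B l j + gcoef_C l j).
  { intros l j Hl Hj; rewrite gc_formula, Hw, Ropp_0, exp_0 by auto; ring. }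
  pose proof (Hinv p 0%nat 0%nat ltac:(lia) ltac:(lia)) as E00.
  pose proof (Hinv p 0%nat 1%nat ltac:(lia) ltac:(lia)) as E01.
  pose proof (Hinv p 0%nat 2%nat ltac:(lia) ltac:(lia)) as E02.
  pose proof (Hinv p 1%nat 0%nat ltac:(lia) ltac:(lia)) as E10.
  pose proof (Hinv p 1%nat 1%nat ltac:(lia) ltac:(lia)) as E11.
  pose proof (Hinv p 1%nat 2%nat ltac:(lia) ltac:(lia)) as E12.
  pose proof (Hinv p 2%nat 0%nat ltac:(lia) ltac:(lia)) as E20.
  pose proof (Hinv p 2%nat 1%nat ltac:(lia) ltac:(lia)) as E21.
  pose proof (Hinv p 2%nat 2%nat ltac:(lia) ltac:(lia)) as E22.
  unfold sum3 in *;
  rewrite !G in E00, E01, E02, E10, E11, E12, E20, E21, E22 by lia.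
  unfold gcoef_A, gcoef_B, gcoef_C in *; simpl in *.
  repeat split; lra.
Qed.

Lemma killing_nabla_at_identity (X : pt) (gam : R -> pt) (Xs DXs : pt -> pt)
    (dg : nat -> nat -> nat -> pt -> R) (ginv : nat -> nat -> pt -> R) :
  is_metric_partials dg -> is_inverse_metric ginv ->
  one_param_subgroup gam X -> killing_generator gam Xs -> self_dir_deriv Xs DXs ->
  nablaYY dg ginv Xs DXs (gam 0) 0%nat
    = -17/8 * X 0%nat * X 2%nat - 15/8 * X 1%nat * X 2%nat /\
  nablaYY dg ginv Xs DXs (gam 0) 1%nat
    = 17/8 * X 1%nat * X 2%nat + 15/8 * X 0%nat * X 2%nat /\
  nablaYY dg ginv Xs DXs (gam 0) 2%nat
    = 3/4 * (X 0%nat * X 0%nat - X 1%nat * X 1%nat).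
Proof.
  intros Hd Hi HG HK HS.
  destruct (one_param_subgroup_at_0 gam X HG) as (g0 & g1 & g2).
  destruct (killing_field_formula X gam Xs HG HK (gam 0)) as (x0 & x1 & x2).
  destruct (killing_self_derivative X gam Xs DXs HG HK HS (gam 0)) as (d0 & d1 & d2).
  destruct (inverse_metric_at_w0 ginv Hi (gam 0) g2)
    as (i00 & i01 & i02 & i10 & i11 & i12 & i20 & i21 & i22).
  pose proof (metric_partials_formula dg Hd) as D.
  unfold nablaYY, Gamma, sum3; rewrite !D by lia.
  rewrite d0, d1, d2, x0, x1, x2, g0, g1, g2,
    i00, i01, i02, i10, i11, i12, i20, i21, i22, Ropp_0, exp_0.
  unfold ebasis, gcoef_A, gcoef_B; simpl.
  repeat split; field.
Qed.

Lemma metric_at_identity (X : pt) :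
  metric ident X X = (X 0%nat - X 1%nat) * (X 0%nat - X 1%nat) / 4
                     + X 2%nat * X 2%nat - (X 0%nat + X 1%nat) * (X 0%nat + X 1%nat).
Proof. unfold metric, coframe, ident; rewrite Ropp_0, exp_0; field. Qed.

(* If c = 0 then a^2 = b^2 and the
   light-cone forces a = b = 0; if c <> 0 the equations for a + b and a - b
   give (a-b)^2 = 16 (a+b)^2, which is incompatible with the light-cone. *)
Lemma lightlike_eigen_trivial (a b c k : R) :
  -17/8 * a * c - 15/8 * b * c = k * a ->
  17/8 * b * c + 15/8 * a * c = k * b ->
  3/4 * (a * a - b * b) = k * c ->
  (a - b) * (a - b) / 4 + c * c - (a + b) * (a + b) = 0 ->
  a = 0 /\ b = 0 /\ c = 0.
Proof.
  intros E0 E1 E2 Hcone.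
  destruct (Req_dec c 0) as [Hc|Hc].
  - rewrite Hc in E2, Hcone.
    assert (Hab : (a - b) * (a + b) = 0) by nra.
    destruct (Rmult_integral _ _ Hab); repeat split; nra.
  - assert (Sum : - c * (a - b) / 4 = k * (a + b)) by lra.
    assert (Diff : 4 * c * (a + b) = k * (b - a)) by lra.
    assert (Hsq : c * ((a - b) * (a - b) - 16 * (a + b) * (a + b)) = 0).
    { replace (c * ((a - b) * (a - b) - 16 * (a + b) * (a + b))) with
        (-4 * ((- c * (a - b) / 4) * (a - b) + (4 * c * (a + b)) * (a + b))) by field.
      rewrite Sum, Diff; ring. }
    destruct (Rmult_integral _ _ Hsq) as [|Hquad]; [contradiction|].
    exfalso; apply Hc; nra.
Qed.

Theorem mainTheorem7 :
  forall (X : pt) (k : R) (gam : R -> pt) (Xs DXs : pt -> pt)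
         (dg : nat -> nat -> nat -> pt -> R) (ginv : nat -> nat -> pt -> R),
    is_metric_partials dg ->
    is_inverse_metric ginv ->
    one_param_subgroup gam X ->
    killing_generator gam Xs ->
    self_dir_deriv Xs DXs ->
    nonzero_lightlike X ->
    ~ (forall t i, (i < 3)%nat ->
         nablaYY dg ginv Xs DXs (gam t) i = k * Xs (gam t) i).
Proof.
  intros X k gam Xs DXs dg ginv Hd Hi HG HK HS [Hcone [m [Hm HXm]]] Heq.
  (* X*_e = X, so the hypothesis at t = 0 is a polynomial system in X *)
  destruct (one_param_subgroup_at_0 gam X HG) as (g0 & g1 & _).
  destruct (killing_field_formula X gam Xs HG HK (gam 0)) as (x0 & x1 & x2).
  rewrite g0, Rmult_0_r, Rminus_0_r in x0; rewrite g1, Rmult_0_r, Rplus_0_r in x1.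
  destruct (killing_nabla_at_identity X gam Xs DXs dg ginv Hd Hi HG HK HS)
    as (N0 & N1 & N2).
  rewrite metric_at_identity in Hcone.
  destruct (lightlike_eigen_trivial (X 0%nat) (X 1%nat) (X 2%nat) k)
    as (a0 & b0 & c0); auto.
  - rewrite <- N0, <- x0; apply Heq; lia.
  - rewrite <- N1, <- x1; apply Heq; lia.
  - rewrite <- N2, <- x2; apply Heq; lia.
  - destruct m as [|[|[|m]]]; [exact (HXm a0) | exact (HXm b0) | exact (HXm c0) | lia].
Qed.
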